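(* Let $n,r,k$ be positive integers with $n\ge 2(k+r)$, let $D$ be a minimum-cardinality $k$-dominating set of the Kneser graph $K(n,r)$, and let $\tilde u\subseteq [n]$ with $|\tilde u|=r-1$. Then there exists $x\in[n]\setminus\tilde u$ such that $\tilde u\cup\{x\}\notin D$.
   Context: For integers $n\ge 2r$, the Kneser graph $K(n,r)$ has as vertices the $r$-element subsets of $[n]=\{1,\dots,n\}$, two vertices being adjacent iff they are disjoint. For a graph $G$ and positive integer $k$, a set $D\subseteq V(G)$ is $k$-dominating if every vertex $u\in V(G)\setminus D$ has at least $k$ neighbors in $D$. *)

From mathcomp Require Import all_boot.
Set Implicit Arguments. Unset Strict Implicit. Unset Printing Implicit Defensive.

Definition kneser_vertex (n r : nat) (A : {set 'I_n}) : bool := #|A| == r.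

Definition kneser_adj (n r : nat) (A B : {set 'I_n}) : bool :=
  [&& kneser_vertex r A, kneser_vertex r B & [disjoint A & B]].

Definition k_dominating (n r k : nat) (D : {set {set 'I_n}}) : Prop :=
  (forall A, A \in D -> kneser_vertex r A) /\
  (forall u : {set 'I_n}, kneser_vertex r u -> u \notin D ->
     k <= #|[set v in D | kneser_adj r u v]|).

Definition min_k_dominating (n r k : nat) (D : {set {set 'I_n}}) : Prop :=
  k_dominating r k D /\
  (forall D' : {set {set 'I_n}}, k_dominating r k D' -> #|D| <= #|D'|).

From mathcomp Require Import all_boot zify.

Set Implicit Arguments. Unset Strict Implicit. Unset Printing Implicit Defensive.

(* Suppose every ũ + x (x ∉ ũ) lies in D. Fix a set K of k + r points outside
   ũ and, inside K, an (r-1)-set P and a k-set Q disjoint from P. Replacing the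
   n - 2r - k + 1 > k vertices ũ + x with x ∉ K by the k vertices P + q (q ∈ Q)
   keeps D k-dominating: a removed vertex ũ + x sees all P + q; a vertex u
   disjoint from ũ sees the vertices ũ + y with y ∈ K \ u, at least k of them,
   none removed; and a vertex meeting ũ had no removed neighbour. The result is
   a smaller k-dominating set, contradicting minimality. *)

Lemma exists_subset_card (T : finType) (A : {set T}) m :
  m <= #|A| -> exists2 B : {set T}, B \subset A & #|B| = m.
Proof.
move=> /card_geqP [s [s_uniq s_size s_A]].
exists [set x in s]; first by apply/subsetP => x; rewrite inE => /s_A.
by rewrite cardsE (card_uniqP s_uniq).
Qed.

Lemma setU1_inj (T : finType) (A : {set T}) x y :
  x \notin A -> y \notin A -> x |: A = y |: A -> x = y.
Proof.
move=> xA _ eqA; have : x \in y |: A by rewrite -eqA setU11.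
by case/setU1P => // xA'; rewrite xA' in xA.
Qed.

Lemma card_imset_setU1 (T : finType) (A X : {set T}) :
  X \subset ~: A -> #|[set x |: A | x in X]| = #|X|.
Proof.
move=> /subsetP XA; apply: card_in_imset => x y /XA + /XA.
by rewrite !inE; exact: setU1_inj.
Qed.

Lemma disjoint_setU1l (T : finType) x (A B : {set T}) :
  [disjoint x |: A & B] = (x \notin B) && [disjoint A & B].
Proof. by rewrite !disjoints_subset subUset sub1set inE. Qed.

Lemma kneser_vertex_setU1 n r (A : {set 'I_n}) x :
  0 < r -> #|A| = r - 1 -> x \notin A -> kneser_vertex r (x |: A).
Proof. by move=> r_gt0 cardA xA; rewrite /kneser_vertex cardsU1 xA cardA; lia. Qed.

Section Exchange.

Variables (n r k : nat) (D : {set {set 'I_n}}) (ut K P Q : {set 'I_n}).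
Hypotheses (r_gt0 : 0 < r) (domD : k_dominating r k D) (card_ut : #|ut| = r - 1).
Hypothesis ut_extensions_in_D : forall x, x \notin ut -> x |: ut \in D.
Hypotheses (K_ut : K \subset ~: ut) (card_K : #|K| = k + r).
Hypotheses (P_K : P \subset K) (card_P : #|P| = r - 1).
Hypotheses (Q_KP : Q \subset K :\: P) (card_Q : #|Q| = k).

Let R : {set {set 'I_n}} := [set x |: ut | x in ~: ut :\: K].
Let G : {set {set 'I_n}} := [set q |: P | q in Q].
Let D' := (D :\: R) :|: G.

Let notin_ut y : y \in K -> y \notin ut.
Proof. by move=> /(subsetP K_ut); rewrite inE. Qed.

Let Q_notin_P q : q \in Q -> q \in K /\ q \notin P.
Proof. by move=> /(subsetP Q_KP) /setDP []. Qed.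

Let G_sub_K v : v \in G -> v \subset K.
Proof. by case/imsetP => q /Q_notin_P [qK _] ->; rewrite subUset sub1set qK. Qed.

Let card_G : #|G| = k.
Proof.
rewrite card_imset_setU1 ?card_Q //; apply/subsetP => q /Q_notin_P [_ qP].
by rewrite inE.
Qed.

Let R_sub_D : R \subset D.
Proof.
apply/subsetP => _ /imsetP [x /setDP [xut _] ->].
by apply: ut_extensions_in_D; rewrite -in_setC.
Qed.

Let card_R : #|R| = n - (r - 1) - (k + r).
Proof.
rewrite card_imset_setU1 ?subsetDl // cardsDS // cardsCs setCK card_ut.
by rewrite card_ord card_K.
Qed.

Let vertex_D' v : v \in D' -> kneser_vertex r v.
Proof.
case/setUP => [/setDP [/(proj1 domD) //] | /imsetP [q /Q_notin_P [_ qP] ->]].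
exact: kneser_vertex_setU1.
Qed.

Let nbrs_removed x :
  x \notin ut -> x \notin K -> k <= #|[set v in D' | kneser_adj r (x |: ut) v]|.
Proof.
move=> xut xK; rewrite -card_G; apply/subset_leq_card/subsetP => v vG.
have vD' : v \in D' by rewrite inE vG orbT.
rewrite inE vD' /kneser_adj kneser_vertex_setU1 ?vertex_D' //=.
rewrite disjoint_setU1l; apply/andP; split.
  by apply: contra xK; apply/subsetP/G_sub_K.
by rewrite disjoint_sym disjoints_subset (subset_trans (G_sub_K vG)).
Qed.

Let nbrs_disjoint u :
  kneser_vertex r u -> [disjoint u & ut] ->
  k <= #|[set v in D' | kneser_adj r u v]|.
Proof.
move=> uV u_ut.
have k_le : k <= #|K :\: u|.
  rewrite cardsD card_K; move/eqP: uV => <-.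
  have : #|K :&: u| <= #|u| by apply/subset_leq_card/subsetIr.
  lia.
rewrite (leq_trans k_le) // -(card_imset_setU1 (A := ut)); last first.
  exact: subset_trans (subsetDl _ _) K_ut.
apply/subset_leq_card/subsetP => _ /imsetP [y /setDP [yK yu] ->].
have yut := notin_ut yK.
rewrite !inE ut_extensions_in_D // andbT /kneser_adj uV kneser_vertex_setU1 //=.
rewrite disjoint_sym disjoint_setU1l yu disjoint_sym u_ut !andbT.
apply/orP; left; apply/negP => /imsetP [x /setDP [xut' xK] /setU1_inj eq_yx].
by move: xK; rewrite -eq_yx ?yK // -in_setC.
Qed.

Let nbrs_meeting u :
  kneser_vertex r u -> u \notin D -> ~~ [disjoint u & ut] ->
  k <= #|[set v in D' | kneser_adj r u v]|.
Proof.
move=> uV uD u_ut; apply: leq_trans (proj2 domD u uV uD) _.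
apply/subset_leq_card/subsetP => v; rewrite !inE => /andP [vD uv].
rewrite vD uv !andbT; apply/orP; left; apply: contra u_ut => /imsetP [x _ vx].
by move: uv; rewrite vx => /and3P [_ _]; apply/disjointWr/subsetUr.
Qed.

Let exchange_k_dominating : k_dominating r k D'.
Proof.
split=> [A |u uV uD']; first exact: vertex_D'.
have [u_ut | u_ut] := boolP [disjoint u & ut]; first exact: nbrs_disjoint.
have [/imsetP [x /setDP [xut xK] ->] | uR] := boolP (u \in R).
  by apply: nbrs_removed; rewrite // -in_setC.
apply: nbrs_meeting => //; apply: contra uD' => uD.
by rewrite !inE uD uR.
Qed.

Let card_exchange : #|D'| + (n - (r - 1) - (k + r)) <= #|D| + k.
Proof.
have := (leq_card_setU (D :\: R) G).1.
have := subset_leq_card R_sub_D.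
rewrite /D' cardsDS // card_G card_R; lia.
Qed.

Lemma exists_smaller_k_dominating : 2 * (k + r) <= n ->
  exists2 D2 : {set {set 'I_n}}, k_dominating r k D2 & #|D2| < #|D|.
Proof. by exists D'; [exact: exchange_k_dominating | move: card_exchange; lia]. Qed.

End Exchange.

Theorem lemma2p2 (n r k : nat) (D : {set {set 'I_n}}) (ut : {set 'I_n}) :
  0 < r -> 0 < k -> 2 * (k + r) <= n ->
  min_k_dominating r k D ->
  #|ut| = r - 1 ->
  exists x : 'I_n, x \notin ut /\ (x |: ut) \notin D.
Proof.
move=> r_gt0 _ n_ge [domD minD] card_ut.
have [/existsP [x /andP [xut xD]] | /existsPn no_x] :=
  boolP [exists x, (x \notin ut) && (x |: ut \notin D)]; first by exists x.
have ext_in_D x : x \notin ut -> x |: ut \in D.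
  by move=> xut; move: (no_x x); rewrite xut negbK.
have [K K_ut card_K] : exists2 K : {set 'I_n}, K \subset ~: ut & #|K| = k + r.
  by apply: exists_subset_card; rewrite cardsCs setCK card_ord card_ut; lia.
have [P P_K card_P] : exists2 P : {set 'I_n}, P \subset K & #|P| = r - 1.
  by apply: exists_subset_card; lia.
have [Q Q_KP card_Q] : exists2 Q : {set 'I_n}, Q \subset K :\: P & #|Q| = k.
  by apply: exists_subset_card; rewrite cardsDS //; lia.
have [D2 domD2] := exists_smaller_k_dominating r_gt0 domD card_ut ext_in_D K_ut
  card_K P_K card_P Q_KP card_Q n_ge.
by rewrite ltnNge minD.
Qed.
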